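(* For any stable set $\Pi$ of forward-looking tree-profiles, the spi-logic $\mathsf{SPi}+\Sigma'_\Pi$, where $\Sigma'_\Pi=\{\iota'_\pi\mid\pi\in\Pi\}$, is complete.
   Context: Fix a non-empty signature $\mathcal R$. Sp-formulas: built from propositional variables and $\top$ with $\wedge$ and diamonds $\Diamond_R$ ($R\in\mathcal R$); sp-implications $\sigma\to\tau$. A SLO is an algebra $(A,\wedge,\top,\Diamond_R)_R$ with $(A,\wedge,\top)$ a meet-semilattice with top $\top$ and each $\Diamond_R$ monotone; it validates $\sigma\to\tau$ if $\sigma[\mathfrak a]\le\tau[\mathfrak a]$ for all valuations. Frames $\mathfrak F=(W,R^{\mathfrak F})_R$ with standard Kripke semantics. $\Sigma\models_{\mathsf{Kr}}\iota$ (resp. $\models_{\mathsf{SLO}}$): $\iota$ valid in all frames (resp. SLOs) validating $\Sigma$. The spi-logic $\mathsf{SPi}+\Sigma=\{\iota\mid\Sigma\models_{\mathsf{SLO}}\iota\}$ is complete if $\Sigma\models_{\mathsf{Kr}}\iota\iff\Sigma\models_{\mathsf{SLO}}\iota$ for all $\iota$. A homomorphism $h:\mathfrak F_1\to\mathfrak F_2$ of frames is a map with $(x,y)\in R^{\mathfrak F_1}\Rightarrow(h(x),h(y))\in R^{\mathfrak F_2}$ for all $R$. A frame is a tree if $(W,\bigcup_RR^{\mathfrak F})$ is a finite directed tree and the relations are pairwise disjoint. A profile $\pi=(\mathfrak G,S,u,v)$ consists of a finite rooted frame $\mathfrak G=(\Delta,R^{\mathfrak G})_R$, $u,v\in\Delta$,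 $S\in\mathcal R$ with $(u,v)\notin S^{\mathfrak G}$; it represents $\Phi_\pi=\forall\bar x\big(\bigwedge_{(x_i,x_j)\in R^{\mathfrak G}}R(x_i,x_j)\to S(u,v)\big)$ (universal closure over $\Delta$). It is a tree-profile if $\mathfrak G$ is a tree, and forward-looking if $u<_{\mathfrak G}v$, where $<_{\mathfrak G}$ is the transitive closure of $\bigcup_R R^{\mathfrak G}$. For a set $\Pi$ of profiles and a frame $\mathfrak F$, $\Pi(\mathfrak F)$ is the smallest frame on the same domain extending $\mathfrak F$ (relation-wise) that satisfies $\Phi_\pi$ for all $\pi\in\Pi$. $\Pi$ is stable if for every $\pi=(\mathfrak G,S,u,v)\in\Pi$ and every tree $\mathfrak T$, every homomorphism $\mathfrak G\to\Pi(\mathfrak T)$ is also a homomorphism $\mathfrak G\to\mathfrak T$. For a model $\mathfrak N=(\mathfrak F,\mathfrak v)$ over a finite frame with root $r$ and no directed cycles, where only finitely many variables are non-empty, define inductively $\mathrm{for}^{\mathfrak N}_w=\bigwedge_{w\in\mathfrak v(p)}p\wedge\bigwedge_{(w,v)\in R^{\mathfrak F},R\in\mathcal R}\Diamond_R\,\mathrm{for}^{\mathfrak N}_v$ (empty conjunction $=\top$) and $\mathrm{for}(\mathfrak N)=\mathrm{for}^{\mathfrak N}_r$. For a forward-looking tree-profile $\pi=(\mathfrak G,S,u,v)$ take a variable $p_x$ for each $x\in\Delta$, the valuation $\mathfrak v(p_x)=\{x\}$, $\mathfrak M=(\mathfrak G,\mathfrak v)$ and $\mathfrak M'=(\mathfrak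 G',\mathfrak v)$ where $\mathfrak G'$ equals $\mathfrak G$ except $S^{\mathfrak G'}=S^{\mathfrak G}\cup\{(u,v)\}$; then $\iota'_\pi=\big(\mathrm{for}(\mathfrak M)\to\mathrm{for}(\mathfrak M')\big)$. *)

From Stdlib Require List.
From mathcomp Require Import all_boot.
Set Implicit Arguments.
Unset Strict Implicit.
Unset Printing Implicit Defensive.

Section SPI.
Variable Sig : Type.

Inductive form : Type :=
  | Var of nat
  | Top
  | And of form & form
  | Dia of Sig & form.

Record impl : Type := Impl { ante : form; cons_ : form }.

Fixpoint bigconj (l : seq form) : form :=
  match l with
  | [::] => Top
  | [:: a] => a
  | a :: l' => And a (bigconj l')
  end.

Definition frel (W : Type) := Sig -> W -> W -> Prop.

Fixpoint sat (W : Type) (F : frel W) (val : nat -> W -> Prop) (phi : form) (w : W)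
  : Prop :=
  match phi with
  | Var p => val p w
  | Top => True
  | And a b => sat F val a w /\ sat F val b w
  | Dia R a => exists v, F R w v /\ sat F val a v
  end.

Definition frame_valid (W : Type) (F : frel W) (i : impl) : Prop :=
  forall (val : nat -> W -> Prop) (w : W), sat F val (ante i) w -> sat F val (cons_ i) w.

Definition Kr_conseq (Sigma : impl -> Prop) (i : impl) : Prop :=
  forall (W : Type) (F : frel W),
    (forall s, Sigma s -> frame_valid F s) -> frame_valid F i.

Record SLO : Type := MkSLO {
  car :> Type;
  meet : car -> car -> car;
  top : car;
  dia : Sig -> car -> car;
  meetA : forall x y z, meet x (meet y z) = meet (meet x y) z;
  meetC : forall x y, meet x y = meet y x;
  meetxx : forall x, meet x x = x;
  meetxT : forall x, meet x top = x;
  dia_mono : forall R x y, meet x y = x -> meet (dia R x) (dia R y) = dia R x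
}.

Definition sle (A : SLO) (x y : A) : Prop := meet x y = x.

Fixpoint eval (A : SLO) (a : nat -> A) (phi : form) : A :=
  match phi with
  | Var p => a p
  | Top => top A
  | And x y => meet (eval a x) (eval a y)
  | Dia R x => dia R (eval a x)
  end.

Definition slo_valid (A : SLO) (i : impl) : Prop :=
  forall a : nat -> A, sle (eval a (ante i)) (eval a (cons_ i)).

Definition SLO_conseq (Sigma : impl -> Prop) (i : impl) : Prop :=
  forall A : SLO, (forall s, Sigma s -> slo_valid A s) -> slo_valid A i.

Definition complete (Sigma : impl -> Prop) : Prop :=
  forall i : impl, Kr_conseq Sigma i <-> SLO_conseq Sigma i.

Definition edge (W : Type) (F : frel W) (x y : W) : Prop := exists R, F R x y.

Inductive tclos (W : Type) (e : W -> W -> Prop) : W -> W -> Prop :=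
  | tc_step x y : e x y -> tclos e x y
  | tc_trans x y z : e x y -> tclos e y z -> tclos e x z.

Definition rtclos (W : Type) (e : W -> W -> Prop) (x y : W) : Prop :=
  x = y \/ tclos e x y.

Definition is_tree_rooted_at (W : Type) (F : frel W) (r : W) : Prop :=
  [/\ forall x, ~ edge F x r,
      forall y, y <> r -> exists! x, edge F x y,
      forall y, rtclos (edge F) r y
    & forall R R' x y, F R x y -> F R' x y -> R = R'].

Definition is_tree (m : nat) (F : frel 'I_m) : Prop :=
  exists r, is_tree_rooted_at F r.

Definition is_hom (W1 W2 : Type) (F1 : frel W1) (F2 : frel W2) (h : W1 -> W2) : Prop :=
  forall R x y, F1 R x y -> F2 R (h x) (h y).

(* A finite frame whose relations have finitely many edges is given by a
   duplicate-free list of labelled edges (R, x, y) over the domain 'I_n;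
   every tree-profile is of this form.  proot is the root of the frame. *)
Record profile : Type := Profile {
  pn : nat;
  proot : 'I_pn;
  pE : seq (Sig * 'I_pn * 'I_pn);
  pS : Sig;
  pu : 'I_pn;
  pv : 'I_pn
}.

Definition pframe (pi : profile) : frel 'I_(pn pi) :=
  fun R x y => List.In (R, x, y) (pE pi).
Arguments pframe : clear implicits.

Definition fl_tree_profile (pi : profile) : Prop :=
  [/\ List.NoDup (pE pi),
      is_tree_rooted_at (pframe pi) (proot pi),
      ~ pframe pi (pS pi) (pu pi) (pv pi)
    & tclos (edge (pframe pi)) (pu pi) (pv pi)].

Definition sat_Phi (W : Type) (F : frel W) (pi : profile) : Prop :=
  forall h : 'I_(pn pi) -> W, is_hom (pframe pi) F h -> F (pS pi) (h (pu pi)) (h (pv pi)).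

(* Pi(F): the smallest frame on the same domain extending F and satisfying
   every Phi_pi, pi in Pi (intersection of all such frames) *)
Definition closure (Pi : profile -> Prop) (W : Type) (F : frel W) : frel W :=
  fun R x y => forall F' : frel W,
    (forall R' x' y', F R' x' y' -> F' R' x' y') ->
    (forall pi, Pi pi -> sat_Phi F' pi) -> F' R x y.

Definition stable (Pi : profile -> Prop) : Prop :=
  forall pi, Pi pi ->
  forall (m : nat) (T : frel 'I_m), is_tree T ->
  forall h : 'I_(pn pi) -> 'I_m,
    is_hom (pframe pi) (closure Pi T) h -> is_hom (pframe pi) T h.

(* for a model on 'I_n whose frame is given by the edge list E and whose
   valuation is v(p_x) = {x} (p_x = Var x):
   for_w = p_w /\ /\_{(R,w,v) in E} <>_R for_v.
   The fuel k is only there for structural recursion; with k = n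
   (no directed cycles, so paths have < n edges) it never runs out. *)
Fixpoint forE (n : nat) (E : seq (Sig * 'I_n * 'I_n)) (k : nat) (w : 'I_n) : form :=
  match k with
  | 0 => Var w
  | k'.+1 => bigconj (Var w :: [seq Dia e.1.1 (forE E k' e.2) | e <- E & e.1.2 == w])
  end.

Definition for_model (n : nat) (E : seq (Sig * 'I_n * 'I_n)) (r : 'I_n) : form :=
  forE E n r.

Definition iota' (pi : profile) : impl :=
  Impl (for_model (pE pi) (proot pi))
       (for_model (rcons (pE pi) (pS pi, pu pi, pv pi)) (proot pi)).

Definition Sigma' (Pi : profile -> Prop) : impl -> Prop :=
  fun i => exists pi, Pi pi /\ i = iota' pi.

End SPI.

(* Soundness is the usual complex-algebra argument. For completeness, suppose
   [sigma -> tau] holds in every frame validating [Sigma'_Pi] and let [A] be an SLO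
   validating [Sigma'_Pi]. In the closure [Pi(T)] of the tree model [T] of [sigma]
   every [Phi_pi] holds, hence so does every [iota'_pi], and so [tau] is true at the
   root. By stability, [Pi(T)] is [T] together with the edges [(h u, h v)] for the
   homomorphisms [h] from profiles of [Pi] into [T]. Label each node of [T] by the
   value in [A] of the part of [sigma] below it, strengthened at the nodes [h u] by
   the constraints [<>_S (label of h v)]; validity of [iota'_pi] in [A] shows that
   such a strengthening keeps the label of the root above [sigma]. Added edges go
   forward in the preorder numbering of [T], so handling the nodes from the last to
   the first gives labels turning every edge of [Pi(T)] into a [<>]-inequality, and
   the truth of [tau] at the root then yields [sigma <= tau] in [A]. *)

From Pilot Require Import Defs.
From mathcomp Require Import all_boot zify.
From Stdlib Require List.
From Stdlib Require Import ClassicalEpsilon Classical_Prop.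
From Stdlib Require Import FunctionalExtensionality PropExtensionality.
Set Implicit Arguments.
Unset Strict Implicit.
Unset Printing Implicit Defensive.

Lemma InP (T : eqType) (x : T) (s : seq T) : reflect (List.In x s) (x \in s).
Proof.
elim: s => [|y s IH] /=; first by right.
rewrite in_cons; apply: (iffP orP) => [[/eqP ->|/IH]|[->|/IH]]; auto.
Qed.

Lemma In_rcons (T : Type) (x y : T) (s : seq T) :
  List.In x (rcons s y) <-> List.In x s \/ x = y.
Proof. rewrite -cats1 List.in_app_iff /=; intuition. Qed.

Lemma In_uniq_snd (T : Type) (U : eqType) (s : seq (T * U)) e1 e2 :
  uniq (map snd s) -> List.In e1 s -> List.In e2 s -> e1.2 = e2.2 -> e1 = e2.
Proof.
elim: s => //= e s IH /andP [Hn Hu] [<-|H1] [<-|H2] // E.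
- by move: Hn; rewrite E; move/InP: (List.in_map snd _ _ H2) => ->.
- by move: Hn; rewrite -E; move/InP: (List.in_map snd _ _ H1) => ->.
- exact: IH.
Qed.

Section SLOOrder.
Variables (Sig : Type) (A : SLO Sig).
Implicit Types x y z : A.

Lemma sle_refl x : sle x x. Proof. exact: meetxx. Qed.

Lemma sle_trans y x z : sle x y -> sle y z -> sle x z.
Proof. by rewrite /sle => Hxy Hyz; rewrite -{1}Hxy -meetA Hyz Hxy. Qed.

Lemma sle_meetl x y : sle (meet x y) x.
Proof. by rewrite /sle meetC meetA meetxx. Qed.

Lemma sle_meetr x y : sle (meet x y) y.
Proof. by rewrite /sle -meetA meetxx. Qed.

Lemma sle_glb z x y : sle z x -> sle z y -> sle z (meet x y).
Proof. by rewrite /sle => Hx Hy; rewrite meetA Hx Hy. Qed.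

Lemma sle_top x : sle x (top A). Proof. exact: meetxT. Qed.

Lemma sle_dia R x y : sle x y -> sle (dia R x) (dia R y).
Proof. exact: dia_mono. Qed.

Lemma sle_meet2 x x' y y' : sle x x' -> sle y y' -> sle (meet x y) (meet x' y').
Proof.
move=> Hx Hy; apply: sle_glb.
  exact: sle_trans (sle_meetl _ _) Hx.
exact: sle_trans (sle_meetr _ _) Hy.
Qed.

Lemma meet_topl x : meet (top A) x = x. Proof. by rewrite meetC meetxT. Qed.

End SLOOrder.

Section ComplexAlgebra.
Variables (Sig W : Type) (F : Defs.frel Sig W).

Lemma pred_ext (X Y : W -> Prop) : (forall w, X w <-> Y w) -> X = Y.
Proof.
by move=> H; apply: functional_extensionality => w; apply: propositional_extensionality.
Qed.

Definition complex_slo : SLO Sig.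
Proof.
refine (@MkSLO Sig (W -> Prop) (fun X Y w => X w /\ Y w) (fun _ => True)
  (fun R X w => exists v, F R w v /\ X v) _ _ _ _ _).
- by move=> X Y Z; apply: pred_ext => w; tauto.
- by move=> X Y; apply: pred_ext => w; tauto.
- by move=> X; apply: pred_ext => w; tauto.
- by move=> X; apply: pred_ext => w; tauto.
- move=> R X Y HXY; apply: pred_ext => w; split; first by case.
  case=> v [Hwv HX]; split; first by exists v.
  exists v; split => //.
  by move: HX; rewrite -(f_equal (fun Z => Z v) HXY) => -[].
Defined.

Lemma eval_complex (a : nat -> W -> Prop) (f : form Sig) w :
  @eval Sig complex_slo a f w <-> sat F a f w.
Proof.
elim: f w => //= [f IHf g IHg|R f IHf] w.
  by rewrite IHf IHg.
by split; case=> v [Hwv Hv]; exists v; split => //; apply/IHf.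
Qed.

Lemma slo_valid_complex (i : impl Sig) : slo_valid complex_slo i <-> frame_valid F i.
Proof.
split=> [Hi V w Hw|Hi V].
  have := f_equal (fun Z => Z w) (Hi V); rewrite /= => Hmeet.
  have : @eval Sig complex_slo V (ante i) w by apply/eval_complex.
  by rewrite -Hmeet => -[_ /eval_complex].
apply: pred_ext => w; split=> [[]//|Hw]; split=> //.
by apply/eval_complex; apply: Hi; apply/eval_complex.
Qed.

End ComplexAlgebra.

Lemma Kr_conseq_of_SLO_conseq (Sig : Type) (Sigma : impl Sig -> Prop) (i : impl Sig) :
  SLO_conseq Sigma i -> Kr_conseq Sigma i.
Proof.
move=> HS W F HF; apply/(slo_valid_complex F); apply: HS => s Hs.
exact/slo_valid_complex/HF.
Qed.

Section Semantics.
Variable Sig : Type.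
Local Notation form := (form Sig).

Lemma sat_frame_mono (W : Type) (F F' : Defs.frel Sig W) V (f : form) w :
  (forall R x y, F R x y -> F' R x y) -> sat F V f w -> sat F' V f w.
Proof.
move=> HF; elim: f w => //= [f IHf g IHg|R f IHf] w.
  by case=> Hf Hg; split; [apply: IHf|apply: IHg].
by case=> v [Hwv Hv]; exists v; split; [apply: HF|apply: IHf].
Qed.

Lemma sat_bigconj (W : Type) (F : Defs.frel Sig W) V (l : seq form) w :
  sat F V (bigconj l) w <-> (forall f, List.In f l -> sat F V f w).
Proof.
elim: l => [|f [|g l] IH] /=; first by split.
  by split=> [H f' [<-|[]]|H]; [|apply: H; left].
split=> [[Hf /IH Hl] f' [<-|]|H] //; first exact: Hl.
by split; [apply: H; left|apply/IH => f' Hf'; apply: H; right].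
Qed.

Lemma eval_bigconj_sle (A : SLO Sig) (a : nat -> A) (l : seq form) f :
  List.In f l -> sle (eval a (bigconj l)) (eval a f).
Proof.
elim: l => [|g [|h l] IH] //=; first by case=> // <-; apply: sle_refl.
case=> [<-|Hf]; first exact: sle_meetl.
exact: sle_trans (sle_meetr _ _) (IH Hf).
Qed.

Fixpoint dia_labels (f : form) : seq Sig :=
  match f with
  | And f g => dia_labels f ++ dia_labels g
  | Dia R f => R :: dia_labels f
  | _ => [::]
  end.

Lemma sat_label_sle (A : SLO Sig) (a : nat -> A) (W : Type) (F : Defs.frel Sig W) V
    (l : W -> A) (f : form) :
  (forall p x, V p x -> sle (l x) (a p)) ->
  (forall R x y, List.In R (dia_labels f) -> F R x y -> sle (l x) (dia R (l y))) ->
  forall w, sat F V f w -> sle (l w) (eval a f).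
Proof.
move=> HV; elim: f => /= [p| |f IHf g IHg|R f IHf] HF w.
- exact: HV.
- by move=> _; apply: sle_top.
- case=> Hf Hg; apply: sle_glb.
    by apply: IHf Hf => R x y HR; apply: HF; apply/List.in_app_iff; left.
  by apply: IHg Hg => R x y HR; apply: HF; apply/List.in_app_iff; right.
- case=> v [Hwv Hv]; apply: sle_trans (HF _ _ _ (or_introl erefl) Hwv) _.
  by apply: sle_dia; apply: IHf Hv => R' x y HR; apply: HF; right.
Qed.

Section ForE.
Variables (n : nat) (E : seq (Sig * 'I_n * 'I_n)).

Lemma In_forE_dia R x y k : List.In (R, x, y) E ->
  List.In (Dia R (Defs.forE E k y)) [seq Dia e.1.1 (Defs.forE E k e.2) | e <- E & e.1.2 == x].
Proof.
move=> HE; apply: (List.in_map (fun e : Sig * 'I_n * 'I_n => Dia e.1.1 (Defs.forE E k e.2))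
  _ (R, x, y)).
by apply/List.filter_In; split=> //=; apply/eqP.
Qed.

Lemma forE_var_sat (W : Type) (F : Defs.frel Sig W) V k x w :
  sat F V (Defs.forE E k x) w -> V x w.
Proof. by case: k => [//|k] /sat_bigconj H; apply: (H (Var Sig x)); left. Qed.

Lemma forE_var_sle (A : SLO Sig) (a : nat -> A) k x : sle (eval a (Defs.forE E k x)) (a x).
Proof.
case: k => [|k]; first exact: sle_refl.
by apply: (eval_bigconj_sle a (f := Var Sig x)); left.
Qed.

Lemma forE_dia_sat (W : Type) (F : Defs.frel Sig W) V R x y k w : List.In (R, x, y) E ->
  sat F V (Defs.forE E k.+1 x) w -> exists v, F R w v /\ sat F V (Defs.forE E k y) v.
Proof.
by move=> HE /sat_bigconj H; apply: (H (Dia R (Defs.forE E k y))); right; apply: In_forE_dia.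
Qed.

Lemma forE_dia_sle (A : SLO Sig) (a : nat -> A) R x y k : List.In (R, x, y) E ->
  sle (eval a (Defs.forE E k.+1 x)) (dia R (eval a (Defs.forE E k y))).
Proof.
move=> HE; apply: (eval_bigconj_sle a (f := Dia R (Defs.forE E k y))).
by right; apply: In_forE_dia.
Qed.

Lemma forE_sat_hom (W : Type) (F : Defs.frel Sig W) V (h : 'I_n -> W) :
  (forall R x y, List.In (R, x, y) E -> F R (h x) (h y)) ->
  (forall x, V (nat_of_ord x) (h x)) ->
  forall k x, sat F V (Defs.forE E k x) (h x).
Proof.
move=> Hh HV; elim=> [|k IH] x; first exact: HV.
apply/sat_bigconj => f [<-|/List.in_map_iff [[[R x'] y] [<- /List.filter_In [HE /eqP /= Hx]]]].
  exact: HV.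
by subst x'; exists (h y); split; [apply: Hh|apply: IH].
Qed.

End ForE.
End Semantics.

Section RootedTree.
Variables (Sig : Type) (n : nat) (F : Defs.frel Sig 'I_n) (r : 'I_n).
Hypothesis HT : is_tree_rooted_at F r.

Definition parent (y : 'I_n) : 'I_n := epsilon (inhabits r) (fun x => edge F x y).

Lemma no_edge_root x : ~ edge F x r.
Proof. by case: HT. Qed.

Lemma edge_parent y : y <> r -> edge F (parent y) y.
Proof.
case: HT => _ Huniq _ _ Hy; have [x [Hx _]] := Huniq y Hy.
by apply: (epsilon_spec (inhabits r) (fun x => edge F x y)); exists x.
Qed.

Lemma edge_nonroot x y : edge F x y -> y <> r.
Proof. by move=> Hxy Hy; apply: (@no_edge_root x); rewrite -Hy. Qed.

Lemma parent_edge x y : edge F x y -> parent y = x.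
Proof.
move=> Hxy; have Hy := edge_nonroot Hxy.
case: HT => _ Huniq _ _; have [z [_ Hz]] := Huniq y Hy.
by rewrite -(Hz _ Hxy) -(Hz _ (edge_parent Hy)).
Qed.

Lemma edge_label_uniq R R' x y : F R x y -> F R' x y -> R = R'.
Proof. by case: HT => _ _ _; apply. Qed.

Lemma reach_root_iter_parent x z : tclos (edge F) x z ->
  forall k, iter k parent x = r -> exists k', iter k' parent z = r.
Proof.
elim=> [x' y Hxy|x' y z' Hxy _ IH] k Hk.
  by exists k.+1; rewrite iterSr (parent_edge Hxy).
by apply: (IH k.+1); rewrite iterSr (parent_edge Hxy).
Qed.

Lemma ex_iter_parent_root y : exists k, iter k parent y == r.
Proof.
case: HT => _ _ Hreach _; case: (Hreach y) => [<-|Hr]; first by exists 0.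
by have [k Hk] := reach_root_iter_parent Hr (k := 0) erefl; exists k; apply/eqP.
Qed.

Definition depth y := ex_minn (ex_iter_parent_root y).

Lemma iter_parent_depth y : iter (depth y) parent y = r.
Proof. by rewrite /depth; case: ex_minnP => k /eqP. Qed.

Lemma depth_min y k : iter k parent y = r -> depth y <= k.
Proof. by rewrite /depth; case: ex_minnP => k' _ Hmin /eqP; apply: Hmin. Qed.

Lemma depth_root : depth r = 0.
Proof. by apply/eqP; rewrite -leqn0; apply: depth_min. Qed.

Lemma depth_eq0 y : depth y = 0 -> y = r.
Proof. by move=> H0; have := iter_parent_depth y; rewrite H0. Qed.

Lemma depth_parent y : y <> r -> depth y = (depth (parent y)).+1.
Proof.
move=> Hy; have H0 : 0 < depth y by rewrite lt0n; apply/eqP => /depth_eq0.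
have Hle : depth (parent y) <= (depth y).-1.
  by apply: depth_min; rewrite -iterSr prednK // iter_parent_depth.
have : depth y <= (depth (parent y)).+1 by apply: depth_min; rewrite iterSr iter_parent_depth.
lia.
Qed.

(* Pigeonhole: the points [iter i parent y], [i <= depth y], are pairwise distinct. *)
Lemma depth_lt y : depth y < n.
Proof.
set s := [seq iter i parent y | i <- iota 0 (depth y).+1].
suff Hu : uniq s.
  by have := max_card (mem s); rewrite card_ord (card_uniqP Hu) size_map size_iota.
rewrite map_inj_in_uniq ?iota_uniq // => i j; rewrite !mem_iota /= !add0n !ltnS => Hi Hj Hij.
wlog Hlt : i j Hi Hj Hij / i < j.
  by move=> Hw; case: (ltngtP i j) => [|/Hw H|//]; [exact: Hw|symmetry; apply: H].
have : iter (depth y - j + i) parent y = r by rewrite iterD Hij -iterD subnK // iter_parent_depth.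
move/depth_min; lia.
Qed.

Lemma depth_iter_parent y i : i <= depth y -> depth (iter i parent y) = depth y - i.
Proof.
elim: i => [|i IH] Hi; first by rewrite subn0.
have Hx : iter i parent y <> r.
  by move=> Hr; have := IH (ltnW Hi); rewrite Hr depth_root; lia.
by rewrite iterS; have := depth_parent Hx; have := IH (ltnW Hi); lia.
Qed.

Lemma edge_iter_parent y i : i < depth y -> edge F (iter i.+1 parent y) (iter i parent y).
Proof.
move=> Hi; have := depth_iter_parent (ltnW Hi).
rewrite iterS; move: (iter i parent y) => x Hx.
by apply: edge_parent => Hr; move: Hx; rewrite Hr depth_root; lia.
Qed.

End RootedTree.

Section TreeHom.
Variables (Sig : Type) (pi : profile Sig).
Local Notation n := (pn pi).
Local Notation E := (pE pi).
Local Notation r := (proot pi).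
Local Notation G := (@pframe _ pi).
Hypothesis HT : is_tree_rooted_at G r.
Local Notation parent := (parent G r).
Local Notation depth := (depth HT).

Variables (W : Type) (F : Defs.frel Sig W) (V : nat -> W -> Prop) (w : W).
Hypothesis Hw : sat F V (Defs.forE E n r) w.

Definition child_spec (x : 'I_n) (a b : W) : Prop :=
  (forall R, G R (parent x) x -> F R a b) /\ sat F V (Defs.forE E (n - depth x) x) b.

Definition child_witness (x : 'I_n) (a : W) : W := epsilon (inhabits a) (child_spec x a).

Lemma child_witness_spec x a : x <> r ->
  sat F V (Defs.forE E (n - depth (parent x)) (parent x)) a ->
  child_spec x a (child_witness x a).
Proof.
move=> Hx Ha; apply: epsilon_spec.
have [R HR] := edge_parent HT Hx.
have Hfuel : n - depth (parent x) = (n - depth x).+1.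
  by have := depth_lt HT x; have := depth_parent HT Hx; lia.
rewrite Hfuel in Ha; have [b [Hab Hb]] := forE_dia_sat HR Ha.
by exists b; split=> // R' HR'; rewrite (edge_label_uniq HT HR' HR).
Qed.

Fixpoint lift_branch (k : nat) (x : 'I_n) : W :=
  if k is k'.+1 then child_witness x (lift_branch k' (parent x)) else w.

Definition tree_hom (x : 'I_n) : W := lift_branch (depth x) x.

Lemma tree_hom_root : tree_hom r = w.
Proof. by rewrite /tree_hom depth_root. Qed.

Lemma tree_hom_parent x : x <> r -> tree_hom x = child_witness x (tree_hom (parent x)).
Proof. by move=> Hx; rewrite /tree_hom depth_parent. Qed.

Lemma tree_hom_sat x : sat F V (Defs.forE E (n - depth x) x) (tree_hom x).
Proof.
have [k Hk] : exists k, depth x = k by eexists.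
elim: k x Hk => [|k IH] x Hk.
  by rewrite (depth_eq0 Hk) tree_hom_root depth_root subn0.
have Hx : x <> r by move=> Hr; move: Hk; rewrite Hr depth_root.
rewrite tree_hom_parent //; apply: (proj2 (child_witness_spec Hx _)).
by apply: IH; have := depth_parent HT Hx; lia.
Qed.

Lemma tree_hom_is_hom : is_hom G F tree_hom.
Proof.
move=> R x y Hxy; have Hxy' : edge G x y by exists R.
have Hy := edge_nonroot HT Hxy'.
rewrite (tree_hom_parent Hy) -(parent_edge HT Hxy') in Hxy *.
exact: (proj1 (child_witness_spec Hy (tree_hom_sat _))).
Qed.

Lemma tree_hom_val (x : 'I_n) : V x (tree_hom x).
Proof. exact: forE_var_sat (tree_hom_sat x). Qed.

End TreeHom.

Lemma frame_valid_iota' (Sig : Type) (pi : profile Sig) (W : Type) (F : Defs.frel Sig W) :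
  is_tree_rooted_at (@pframe _ pi) (proot pi) -> sat_Phi F pi -> frame_valid F (iota' pi).
Proof.
move=> HT HPhi V w Hw; rewrite /= /for_model -(tree_hom_root HT F V w).
have Hhom := tree_hom_is_hom HT Hw.
apply: forE_sat_hom (tree_hom_val HT Hw) _ _ => R x y /In_rcons [HE|[-> -> ->]].
  exact: Hhom.
exact: HPhi.
Qed.

(* The diamonds of [f] are numbered in preorder from [b], and [cur] is the node of the
   enclosing diamond: [dia_edges f b cur] lists the labelled edges (R, parent, child),
   [var_atoms f b cur] the pairs (node, variable), and [dia_body f b v] is the argument
   of diamond [v], whose own diamonds occupy [[v.+1, subtree_end f b v)]. *)
Section Syntax.
Variable Sig : Type.
Local Notation form := (form Sig).

Fixpoint ndia (f : form) : nat :=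
  match f with And p q => ndia p + ndia q | Dia _ p => (ndia p).+1 | _ => 0 end.

Fixpoint dia_edges (f : form) (b cur : nat) : seq (Sig * nat * nat) :=
  match f with
  | And p q => dia_edges p b cur ++ dia_edges q (b + ndia p) cur
  | Dia R p => (R, cur, b) :: dia_edges p b.+1 b
  | _ => [::]
  end.

Fixpoint var_atoms (f : form) (b cur : nat) : seq (nat * nat) :=
  match f with
  | Var p => [:: (cur, p)]
  | And p q => var_atoms p b cur ++ var_atoms q (b + ndia p) cur
  | Dia R p => var_atoms p b.+1 b
  | Top => [::]
  end.

Fixpoint dia_body (f : form) (b v : nat) : form :=
  match f with
  | And p q => if v < b + ndia p then dia_body p b v else dia_body q (b + ndia p) v
  | Dia R p => if v == b then p else dia_body p b.+1 v
  | _ => Top Sig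
  end.

Definition subtree_end (f : form) (b v : nat) : nat := v + (ndia (dia_body f b v)).+1.

Definition outside (f : form) (b cur : nat) : bool := (cur < b) || (b + ndia f <= cur).

Lemma dia_body_Andl (p q : form) b v : v < b + ndia p -> dia_body (And p q) b v = dia_body p b v.
Proof. by move=> /= ->. Qed.

Lemma dia_body_Andr (p q : form) b v :
  b + ndia p <= v -> dia_body (And p q) b v = dia_body q (b + ndia p) v.
Proof. by move=> /= Hv; rewrite ifN // -leqNgt. Qed.

Lemma dia_body_Dia0 R (p : form) b : dia_body (Dia R p) b b = p.
Proof. by rewrite /= eqxx. Qed.

Lemma dia_body_DiaS R (p : form) b v : v != b -> dia_body (Dia R p) b v = dia_body p b.+1 v.
Proof. by move=> /= /negbTE ->. Qed.

Lemma subtree_end_Andl (p q : form) b v :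
  v < b + ndia p -> subtree_end (And p q) b v = subtree_end p b v.
Proof. by move=> Hv; rewrite /subtree_end dia_body_Andl. Qed.

Lemma subtree_end_Andr (p q : form) b v :
  b + ndia p <= v -> subtree_end (And p q) b v = subtree_end q (b + ndia p) v.
Proof. by move=> Hv; rewrite /subtree_end dia_body_Andr. Qed.

Lemma subtree_end_DiaS R (p : form) b v :
  v != b -> subtree_end (Dia R p) b v = subtree_end p b.+1 v.
Proof. by move=> Hv; rewrite /subtree_end dia_body_DiaS. Qed.

Lemma dia_edges_range f b cur e : List.In e (dia_edges f b cur) ->
  b <= e.2 < b + ndia f /\ (e.1.2 = cur \/ b <= e.1.2 < e.2).
Proof.
elim: f b cur => //= [p IHp q IHq|R p IHp] b cur.
  by move/List.in_app_iff => [/IHp|/IHq] [Hy [Hx|Hx]]; split; lia.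
case=> [<- /=|/IHp [Hy Hx]]; first by split; [lia|left].
by split; [lia|right; case: Hx => [->|]; lia].
Qed.

Lemma var_atoms_range f b cur x p : List.In (x, p) (var_atoms f b cur) ->
  x = cur \/ b <= x < b + ndia f.
Proof.
elim: f b cur => //= [q|p1 IHp q IHq|R p1 IHp] b cur.
- by case=> // -[-> _]; left.
- by move/List.in_app_iff => [/IHp|/IHq] [->|Hx]; [left|right; lia|left|right; lia].
- by move/IHp => [->|Hx]; right; lia.
Qed.

Lemma subtree_end_le f b v : b <= v < b + ndia f -> subtree_end f b v <= b + ndia f.
Proof.
rewrite /subtree_end; elim: f b => [q| |p IHp q IHq|R p IHp] b /= Hv; try lia.
- by case: ifP => Hvp; [move: (IHp b)|move: (IHq (b + ndia p))]; lia.
- by case: eqP => [->|Hvb]; [|move: (IHp b.+1)]; lia.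
Qed.

Lemma dia_edges_nested f b cur R x y : List.In (R, x, y) (dia_edges f b cur) -> x <> cur ->
  subtree_end f b y <= subtree_end f b x.
Proof.
rewrite /subtree_end; elim: f b cur => //= [p IHp q IHq|R' p IHp] b cur.
- move=> /List.in_app_iff [He|He] Hx; have /= [Hy Hx'] := dia_edges_range He.
    have -> : (y < b + ndia p) = true by lia.
    have -> : (x < b + ndia p) = true by lia.
    exact: IHp He Hx.
  have -> : (y < b + ndia p) = false by lia.
  have -> : (x < b + ndia p) = false by case: Hx'; lia.
  exact: IHq He Hx.
- case=> [[_ ->] //|He] Hx; have /= [Hy Hx'] := dia_edges_range He.
  have -> : (y == b) = false by lia.
  case: (eqVneq x b) => [->|Hxb]; last exact: IHp He (elimN eqP Hxb).
  by move: (subtree_end_le (f := p) (b := b.+1) (v := y)); rewrite /subtree_end; lia.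
Qed.

Lemma map_snd_dia_edges f b cur : map snd (dia_edges f b cur) = iota b (ndia f).
Proof.
elim: f b cur => //= [p IHp q IHq|R p IHp] b cur; last by rewrite IHp.
by rewrite map_cat IHp IHq iotaD.
Qed.

End Syntax.

Section TreeModel.
Variables (Sig : Type) (s : form Sig).
Local Notation m := (ndia s).+1.

Definition tree_edges : seq (Sig * nat * nat) := dia_edges s 1 0.

Definition tree_frame : Defs.frel Sig 'I_m :=
  fun R x y => List.In (R, nat_of_ord x, nat_of_ord y) tree_edges.

Definition tree_val : nat -> 'I_m -> Prop :=
  fun p x => List.In (nat_of_ord x, p) (var_atoms s 1 0).

Lemma tree_edges_range R x y : List.In (R, x, y) tree_edges ->
  0 < y < m /\ (x = 0 \/ 0 < x < y).
Proof. by move/dia_edges_range => /= [Hy Hx]; split; lia. Qed.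

Lemma tree_frame_lt R x y : tree_frame R x y -> x < y.
Proof. by move/tree_edges_range; lia. Qed.

Lemma tree_edges_target_inj e1 e2 :
  List.In e1 tree_edges -> List.In e2 tree_edges -> e1.2 = e2.2 -> e1 = e2.
Proof. by apply: (@In_uniq_snd (Sig * nat)); rewrite map_snd_dia_edges iota_uniq. Qed.

Lemma sat_tree_model_sub f b (cur : 'I_m) :
  (forall e, List.In e (dia_edges f b cur) -> List.In e tree_edges) ->
  (forall e, List.In e (var_atoms f b cur) -> List.In e (var_atoms s 1 0)) ->
  b + ndia f <= m -> sat tree_frame tree_val f cur.
Proof.
elim: f b cur => [p| |p IHp q IHq|R p IHp] b cur /= HE HV Hb //.
- by apply: HV; left.
- split.
    by apply: (IHp b) => [e He|e He|]; [apply: HE|apply: HV|lia]; apply/List.in_app_iff; left.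
  by apply: (IHq (b + ndia p)) => [e He|e He|]; [apply: HE|apply: HV|lia];
    apply/List.in_app_iff; right.
- have Hb' : b < m by lia.
  exists (Ordinal Hb'); split; first by apply: HE; left.
  by apply: (IHp b.+1) => /= [e He|e He|]; [apply: HE; right|apply: HV|lia].
Qed.

Lemma sat_tree_model : sat tree_frame tree_val s ord0.
Proof. exact: (sat_tree_model_sub (b := 1)). Qed.

Lemma tree_frame_reach_sub f b (cur : 'I_m) :
  (forall e, List.In e (dia_edges f b cur) -> List.In e tree_edges) -> b + ndia f <= m ->
  forall v : 'I_m, b <= v < b + ndia f -> tclos (edge tree_frame) cur v.
Proof.
elim: f b cur => [p| |p IHp q IHq|R p IHp] b cur /= HE Hb v Hv; try lia.
- case: (ltnP v (b + ndia p)) => Hvp.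
    by apply: (IHp b) => [e He||]; [apply: HE; apply/List.in_app_iff; left|lia|lia].
  by apply: (IHq (b + ndia p)) => [e He||]; [apply: HE; apply/List.in_app_iff; right|lia|lia].
- have Hb' : b < m by lia.
  have Hcur : edge tree_frame cur (Ordinal Hb') by exists R; apply: HE; left.
  case: (eqVneq (nat_of_ord v) b) => Hvb.
    have -> : v = Ordinal Hb' by apply: val_inj.
    exact: tc_step.
  by apply: tc_trans Hcur _; apply: (IHp b.+1) => /= [e He||]; [apply: HE; right|lia|lia].
Qed.

Lemma tree_frame_rooted : is_tree_rooted_at tree_frame ord0.
Proof.
split.
- by move=> x [R /tree_edges_range /=]; lia.
- move=> y Hy; have Hy0 : 0 < y by rewrite lt0n; apply: contra_not_neq Hy => Hy; apply: val_inj.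
  have : nat_of_ord y \in map snd tree_edges.
    by rewrite map_snd_dia_edges mem_iota; have := ltn_ord y; lia.
  move/InP/List.in_map_iff => [[[R x] y'] [/= Ey HE]]; subst y'.
  have Hx : x < m by have := tree_edges_range HE; lia.
  exists (Ordinal Hx); split; first by exists R.
  by move=> x' [R' HE']; apply: val_inj; case: (tree_edges_target_inj HE HE' erefl).
- move=> y; case: (eqVneq y ord0) => [->|Hy]; [by left|right].
  apply: (tree_frame_reach_sub (f := s) (b := 1)) => //.
  have : nat_of_ord y != 0 by apply: contra Hy => /eqP Hy; apply/eqP/val_inj.
  by have := ltn_ord y; lia.
- by move=> R R' x y H1 H2; case: (tree_edges_target_inj H1 H2 erefl).
Qed.

End TreeModel.

Arguments tree_frame {Sig} s.
Arguments tree_val {Sig} s.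

Section ConstrainedEval.
Variables (Sig : Type) (A : SLO Sig) (a : nat -> A).
Local Notation form := (form Sig).
Implicit Types (c : nat -> A) (f : form).

Fixpoint ceval c f (b : nat) : A :=
  match f with
  | Var p => a p
  | Top => top A
  | And p q => meet (ceval c p b) (ceval c q (b + ndia p))
  | Dia R p => dia R (meet (c b) (ceval c p b.+1))
  end.

Definition node_val c f (b v : nat) : A := meet (c v) (ceval c (dia_body f b v) v.+1).

Lemma ceval_top f b : ceval (fun _ => top A) f b = eval a f.
Proof. by elim: f b => //= [p IHp q IHq|R p IHp] b; rewrite ?IHp ?IHq ?meet_topl. Qed.

Lemma ceval_local c c' f b :
  (forall i, b <= i < b + ndia f -> c i = c' i) -> ceval c f b = ceval c' f b.
Proof.
elim: f b => //= [p IHp q IHq|R p IHp] b Hc.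
  by rewrite (IHp b) ?(IHq (b + ndia p)) // => i Hi; apply: Hc; lia.
by rewrite Hc ?(IHp b.+1) // => [i Hi|]; [apply: Hc|]; lia.
Qed.

Lemma node_val_local c c' f b v :
  (forall i, v <= i < subtree_end f b v -> c i = c' i) -> node_val c f b v = node_val c' f b v.
Proof.
rewrite /subtree_end => Hc; rewrite /node_val Hc ?(ceval_local (c' := c')) // => [i Hi|];
  [apply: Hc|]; lia.
Qed.

Lemma node_val_Andl c p q b v : v < b + ndia p -> node_val c (And p q) b v = node_val c p b v.
Proof. by move=> Hv; rewrite /node_val dia_body_Andl. Qed.

Lemma node_val_Andr c p q b v :
  b + ndia p <= v -> node_val c (And p q) b v = node_val c q (b + ndia p) v.
Proof. by move=> Hv; rewrite /node_val dia_body_Andr. Qed.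

Lemma node_val_Dia0 c R p b : node_val c (Dia R p) b b = meet (c b) (ceval c p b.+1).
Proof. by rewrite /node_val dia_body_Dia0. Qed.

Lemma node_val_DiaS c R p b v : v != b -> node_val c (Dia R p) b v = node_val c p b.+1 v.
Proof. by move=> Hv; rewrite /node_val dia_body_DiaS. Qed.

Lemma ceval_edge_sle c f b cur R y : outside f b cur ->
  List.In (R, cur, y) (dia_edges f b cur) -> sle (ceval c f b) (dia R (node_val c f b y)).
Proof.
rewrite /outside; elim: f b cur => //= [p IHp q IHq|R' p IHp] b cur Hcur.
  move/List.in_app_iff => [He|He]; have /= [Hy _] := dia_edges_range He.
    rewrite node_val_Andl; last lia.
    by apply: sle_trans (sle_meetl _ _) (IHp _ _ _ He); lia.
  rewrite node_val_Andr; last lia.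
  by apply: sle_trans (sle_meetr _ _) (IHq _ _ _ He); lia.
case=> [[-> <-]|He]; first by rewrite node_val_Dia0; apply: sle_refl.
by have /= := dia_edges_range He; lia.
Qed.

Lemma node_val_edge_sle c f b cur R x y : outside f b cur ->
  List.In (R, x, y) (dia_edges f b cur) -> x <> cur ->
  sle (node_val c f b x) (dia R (node_val c f b y)).
Proof.
rewrite /outside; elim: f b cur => //= [p IHp q IHq|R' p IHp] b cur Hcur.
  move/List.in_app_iff => [He|He] Hx; have /= [Hy Hx'] := dia_edges_range He.
    by rewrite !node_val_Andl; try lia; apply: (IHp _ _ _ He) => //; lia.
  by rewrite !node_val_Andr; try lia; apply: (IHq _ _ _ He) => //; lia.
case=> [[_ -> _] //|He] Hx; have /= [Hy Hx'] := dia_edges_range He.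
rewrite [node_val _ _ _ y]node_val_DiaS; last lia.
case: (eqVneq x b) He => [-> He|Hxb He].
  rewrite node_val_Dia0; apply: sle_trans (sle_meetr _ _) (ceval_edge_sle _ _ He).
  by rewrite /outside; lia.
by rewrite node_val_DiaS //; apply: (IHp _ _ _ He); [lia|apply/eqP].
Qed.

Lemma ceval_var_sle c f b cur p : outside f b cur ->
  List.In (cur, p) (var_atoms f b cur) -> sle (ceval c f b) (a p).
Proof.
rewrite /outside; elim: f b cur => //= [q|p1 IHp q IHq|R p1 IHp] b cur Hcur.
- by case=> // -[->]; apply: sle_refl.
- move/List.in_app_iff => [Hp|Hp].
    by apply: sle_trans (sle_meetl _ _) (IHp _ _ _ Hp); lia.
  by apply: sle_trans (sle_meetr _ _) (IHq _ _ _ Hp); lia.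
- by move/var_atoms_range; lia.
Qed.

Lemma node_val_var_sle c f b cur x p : outside f b cur ->
  List.In (x, p) (var_atoms f b cur) -> x <> cur -> sle (node_val c f b x) (a p).
Proof.
rewrite /outside; elim: f b cur => //= [q|p1 IHp q IHq|R p1 IHp] b cur Hcur.
- by case=> // -[-> _].
- move/List.in_app_iff => [Hp|Hp] Hx; have := var_atoms_range Hp => Hx'.
    by rewrite node_val_Andl; try lia; apply: (IHp _ _ _ Hp) => //; lia.
  by rewrite node_val_Andr; try lia; apply: (IHq _ _ _ Hp) => //; lia.
- move=> Hp Hx; have := var_atoms_range Hp => Hx'.
  case: (eqVneq x b) Hp => [-> Hp|Hxb Hp].
    rewrite node_val_Dia0; apply: sle_trans (sle_meetr _ _) (ceval_var_sle _ _ Hp).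
    by rewrite /outside; lia.
  by rewrite node_val_DiaS //; apply: (IHp _ _ _ Hp); [lia|apply/eqP].
Qed.

Lemma ceval_replace_sle c c' k f b cur R y : outside f b cur ->
  List.In (R, cur, y) (dia_edges f b cur) -> (forall i, i <> k -> c i = c' i) ->
  y <= k < subtree_end f b y ->
  sle (meet (ceval c f b) (dia R (node_val c' f b y))) (ceval c' f b).
Proof.
rewrite /outside; elim: f b cur => //= [p IHp q IHq|R' p IHp] b cur Hcur.
  move/List.in_app_iff => [He|He] Hc; have /= [Hy _] := dia_edges_range He.
    rewrite node_val_Andl ?subtree_end_Andl; try lia; move=> Hk.
    have := subtree_end_le Hy => Hend.
    rewrite -(ceval_local (c := c) (c' := c') (f := q)); last by move=> i Hi; apply: Hc; lia.
    apply: sle_glb; last exact: sle_trans (sle_meetl _ _) (sle_meetr _ _).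
    by apply: sle_trans (sle_meet2 (sle_meetl _ _) (sle_refl _)) (IHp _ _ _ He Hc Hk); lia.
  rewrite node_val_Andr ?subtree_end_Andr; try lia; move=> Hk.
  rewrite -(ceval_local (c := c) (c' := c') (f := p)); last by move=> i Hi; apply: Hc; lia.
  apply: sle_glb; first exact: sle_trans (sle_meetl _ _) (sle_meetl _ _).
  by apply: sle_trans (sle_meet2 (sle_meetr _ _) (sle_refl _)) (IHq _ _ _ He Hc Hk); lia.
case=> [[-> <-]|He]; first by rewrite node_val_Dia0 => _ _; apply: sle_meetr.
by have /= := dia_edges_range He; lia.
Qed.

Lemma node_val_replace_sle c c' k f b cur R x y : outside f b cur ->
  List.In (R, x, y) (dia_edges f b cur) -> x <> cur -> (forall i, i <> k -> c i = c' i) ->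
  y <= k < subtree_end f b y ->
  sle (meet (node_val c f b x) (dia R (node_val c' f b y))) (node_val c' f b x).
Proof.
rewrite /outside; elim: f b cur => //= [p IHp q IHq|R' p IHp] b cur Hcur.
  move/List.in_app_iff => [He|He] Hx Hc; have /= [Hy Hx'] := dia_edges_range He.
    rewrite !node_val_Andl ?subtree_end_Andl; try lia; move=> Hk.
    by apply: (IHp _ _ _ He Hx Hc Hk); lia.
  rewrite !node_val_Andr ?subtree_end_Andr; try lia; move=> Hk.
  by apply: (IHq _ _ _ He Hx Hc Hk); lia.
case=> [[_ -> _] //|He] Hx Hc; have /= [Hy Hx'] := dia_edges_range He.
rewrite [node_val _ _ _ y]node_val_DiaS ?subtree_end_DiaS; try lia; move=> Hk.
case: (eqVneq x b) He => [-> He|Hxb He]; last first.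
  by rewrite !node_val_DiaS //; apply: (IHp _ _ _ He _ Hc Hk); [lia|apply/eqP].
rewrite !node_val_Dia0 -(Hc b); last lia.
apply: sle_glb; first exact: sle_trans (sle_meetl _ _) (sle_meetl _ _).
apply: sle_trans (sle_meet2 (sle_meetr _ _) (sle_refl _)) (ceval_replace_sle _ He Hc Hk).
by rewrite /outside; lia.
Qed.

Lemma ceval_node_mono c c' k f b y : b <= y < b + ndia f -> y <= k < subtree_end f b y ->
  (forall i, i <> k -> c i = c' i) -> sle (node_val c f b y) (node_val c' f b y) ->
  sle (ceval c f b) (ceval c' f b).
Proof.
elim: f b => [q| |p IHp q IHq|R p IHp] b /= Hy; try lia.
  case: (ltnP y (b + ndia p)) => Hyp.
    rewrite !node_val_Andl ?subtree_end_Andl // => Hk Hc Hval.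
    have := subtree_end_le (f := p) (b := b) (v := y) => Hend.
    rewrite -(ceval_local (c := c) (c' := c') (f := q)); last by move=> i Hi; apply: Hc; lia.
    by apply: sle_meet2 (IHp _ _ Hk Hc Hval) (sle_refl _); lia.
  rewrite !node_val_Andr ?subtree_end_Andr // => Hk Hc Hval.
  rewrite -(ceval_local (c := c) (c' := c') (f := p)); last by move=> i Hi; apply: Hc; lia.
  by apply: sle_meet2 (sle_refl _) (IHq _ _ Hk Hc Hval); lia.
case: (eqVneq y b) => [->|Hyb]; first by rewrite !node_val_Dia0 => _ _ Hval; apply: sle_dia.
rewrite !node_val_DiaS ?subtree_end_DiaS // => Hk Hc Hval.
rewrite -(Hc b); last lia.
by apply: sle_dia; apply: sle_meet2 (sle_refl _) (IHp _ _ Hk Hc Hval); lia.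
Qed.

End ConstrainedEval.

Definition upd (T : Type) (c : nat -> T) (k : nat) (x : T) : nat -> T :=
  fun i => if i == k then x else c i.

Lemma upd_same (T : Type) (c : nat -> T) k x : upd c k x k = x.
Proof. by rewrite /upd eqxx. Qed.

Lemma upd_other (T : Type) (c : nat -> T) k x i : i <> k -> upd c k x i = c i.
Proof. by move=> Hik; rewrite /upd ifN //; apply/eqP. Qed.

Section TreeLabel.
Variables (Sig : Type) (R0 : Sig) (s : form Sig) (A : SLO Sig) (a : nat -> A).
Local Notation m := (ndia s).+1.
Local Notation wrapped := (Dia R0 s).

(* Numbering the diamonds of [Dia R0 s] from [0] makes the root of the tree model a
   diamond node too, so every node gets a label: its constraint met with the
   constrained value of the subtree below it. *)
Definition tree_label (c : nat -> A) (v : nat) : A := node_val a c wrapped 0 v.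

Lemma outside_wrapped : outside wrapped 0 m.
Proof. by rewrite /outside /=; lia. Qed.

Lemma tree_label_edge c R (x y : 'I_m) : tree_frame s R x y ->
  sle (tree_label c x) (dia R (tree_label c y)).
Proof.
move=> Hxy; apply: (node_val_edge_sle a c outside_wrapped (or_intror Hxy)).
by have := ltn_ord x; lia.
Qed.

Lemma tree_label_var c p (x : 'I_m) : tree_val s p x -> sle (tree_label c x) (a p).
Proof.
by move=> Hx; apply: (node_val_var_sle a c outside_wrapped Hx); have := ltn_ord x; lia.
Qed.

Lemma tree_label_local c c' v : (forall i, v <= i -> c i = c' i) ->
  tree_label c v = tree_label c' v.
Proof. by move=> Hc; apply: node_val_local => i Hi; apply: Hc; lia. Qed.

Lemma tree_label_top : tree_label (fun _ => top A) 0 = eval a s.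
Proof. by rewrite /tree_label node_val_Dia0 ceval_top meet_topl. Qed.

Lemma tree_label_sle c v : sle (tree_label c v) (c v).
Proof. exact: sle_meetl. Qed.

Lemma subtree_end_edge R (x y : 'I_m) :
  tree_frame s R x y -> subtree_end wrapped 0 y <= subtree_end wrapped 0 x.
Proof.
move=> Hxy; have Hnest := dia_edges_nested (f := wrapped) (b := 0) (cur := m) (or_intror Hxy).
by apply: Hnest; have := ltn_ord x; lia.
Qed.

Lemma tree_label_replace c c' k R (x y : 'I_m) : tree_frame s R x y ->
  (forall i, i <> k -> c i = c' i) -> y <= k < subtree_end wrapped 0 y ->
  sle (meet (tree_label c x) (dia R (tree_label c' y))) (tree_label c' x).
Proof.
move=> Hxy Hc Hk; apply: (node_val_replace_sle a outside_wrapped (or_intror Hxy) _ Hc Hk).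
by have := ltn_ord x; lia.
Qed.

Lemma tree_label_root_mono c c' k y : y < m -> y <= k < subtree_end wrapped 0 y ->
  (forall i, i <> k -> c i = c' i) ->
  sle (tree_label c y) (tree_label c' y) -> sle (tree_label c 0) (tree_label c' 0).
Proof.
move=> Hy Hk Hc Hval; case: (eqVneq y 0) Hk Hval => [-> //|Hy0] Hk Hval.
rewrite /tree_label !node_val_Dia0 -(Hc 0); last lia.
apply: sle_meet2 (sle_refl _) _.
apply: (ceval_node_mono (y := y) (k := k)) => //; first lia.
- by move: Hk; rewrite subtree_end_DiaS.
- by move: Hval; rewrite /tree_label !node_val_DiaS.
Qed.

Definition strengthen (c : nat -> A) (k : nat) (R : Sig) (y : nat) : nat -> A :=
  upd c k (meet (c k) (dia R (tree_label c y))).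

End TreeLabel.

Section Strengthen.
Variables (Sig : Type) (R0 : Sig) (s : form Sig) (A : SLO Sig) (a : nat -> A).
Variable pi : profile Sig.
Local Notation G := (@pframe _ pi).
Local Notation n := (pn pi).
Local Notation E := (pE pi).
Local Notation E' := (rcons (pE pi) (pS pi, pu pi, pv pi)).
Local Notation r := (proot pi).
Local Notation u := (pu pi).
Hypothesis HT : is_tree_rooted_at G r.
Hypothesis Hiota : slo_valid A (iota' pi).
Variable h : 'I_n -> 'I_(ndia s).+1.
Hypothesis Hh : is_hom G (tree_frame s) h.
Variable c : nat -> A.

Local Notation label := (tree_label R0 s a).
Local Notation ancestor i := (iter i (parent G r) u).
Local Notation cs := (strengthen R0 s a c (h u) (pS pi) (h (pv pi))).

Lemma strengthen_other (i : nat) : i <> h u -> c i = cs i.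
Proof. by move=> Hi; rewrite /strengthen upd_other. Qed.

Lemma ancestor_subtree i :
  i <= depth HT u -> h (ancestor i) <= h u < subtree_end (Dia R0 s) 0 (h (ancestor i)).
Proof.
elim: i => [|i IH] Hi; first by rewrite /subtree_end /=; lia.
have [R HR] := edge_iter_parent Hi; have Hedge := Hh HR.
by have := tree_frame_lt Hedge; have := subtree_end_edge R0 Hedge; have := IH (ltnW Hi); lia.
Qed.

Let val (p : nat) : A := label c (h (insubd u p)).

Lemma val_ord (x : 'I_n) : val x = label c (h x).
Proof. by rewrite /val valKd. Qed.

Lemma label_sle_forE j x : sle (label c (h x)) (eval val (Defs.forE E j x)).
Proof.
apply: (sat_label_sle (F := G) (V := fun p y => p = nat_of_ord y) (l := fun y => label c (h y))).
- by move=> p y ->; rewrite val_ord; apply: sle_refl.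
- by move=> R y z _ Hyz; apply: tree_label_edge; apply: Hh.
- exact: (forE_sat_hom (h := id)).
Qed.

Lemma forE'_sle_source j : sle (eval val (Defs.forE E' j.+1 u)) (label cs (h u)).
Proof.
have Hu := forE_var_sle E' val j.+1 u; rewrite val_ord in Hu.
have Hv := forE_var_sle E' val j (pv pi); rewrite val_ord in Hv.
have HE : List.In (pS pi, u, pv pi) E' by apply/In_rcons; right.
have Huv := forE_dia_sle val j HE.
rewrite /tree_label /node_val /strengthen upd_same (ceval_local a (c' := c)); last first.
  by move=> i Hi; apply: upd_other; lia.
apply: sle_glb; first apply: sle_glb.
- exact: sle_trans Hu (sle_meetl _ _).
- exact: sle_trans Huv (sle_dia _ Hv).
- exact: sle_trans Hu (sle_meetr _ _).
Qed.

Lemma forE'_sle_ancestor i j : i <= depth HT u -> i < j ->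
  sle (eval val (Defs.forE E' j (ancestor i))) (label cs (h (ancestor i))).
Proof.
elim: i j => [|i IH] [|j] Hi Hj //; first exact: forE'_sle_source.
have [R HR] := edge_iter_parent Hi.
have HR' : List.In (R, ancestor i.+1, ancestor i) E' by apply/In_rcons; left.
have Hx := forE_var_sle E' val j.+1 (ancestor i.+1); rewrite val_ord in Hx.
apply: sle_trans (tree_label_replace a (Hh HR) strengthen_other (ancestor_subtree (ltnW Hi))).
apply: sle_glb; first exact: Hx.
exact: sle_trans (forE_dia_sle val j HR') (sle_dia _ (IH j (ltnW Hi) Hj)).
Qed.

(* [val] is the valuation [p_x |-> label c (h x)]; validity of [iota' pi] under it
   carries the new conjunct [dia S (label c (h v))] from [h u] up to the root. *)
Lemma tree_label_strengthen : sle (label c 0) (label cs 0).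
Proof.
have Hroot : ancestor (depth HT u) = r := iter_parent_depth HT u.
have Hsub := ancestor_subtree (leqnn _); rewrite Hroot in Hsub.
apply: (tree_label_root_mono (y := h r) (k := h u)) => //; first exact: strengthen_other.
have Hr := forE'_sle_ancestor (leqnn _) (depth_lt HT u); rewrite Hroot in Hr.
exact: sle_trans (label_sle_forE _ _) (sle_trans (Hiota val) Hr).
Qed.

End Strengthen.

Section Closure.
Variables (Sig : Type) (Pi : profile Sig -> Prop).

Definition added (W : Type) (F : Defs.frel Sig W) : Defs.frel Sig W :=
  fun R x y => exists2 pi, Pi pi &
    R = pS pi /\ exists h, [/\ is_hom (@pframe _ pi) F h, x = h (pu pi) & y = h (pv pi)].

Lemma closure_ext (W : Type) (F : Defs.frel Sig W) R x y : F R x y -> Defs.closure Pi F R x y.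
Proof. by move=> HF F' HF' _; apply: HF'. Qed.

Lemma closure_Phi (W : Type) (F : Defs.frel Sig W) pi : Pi pi -> sat_Phi (Defs.closure Pi F) pi.
Proof.
move=> Hpi h Hh F' HF HPhi; apply: (HPhi pi Hpi) => R x y Hxy.
exact: Hh _ _ _ Hxy F' HF HPhi.
Qed.

Lemma added_closure (W : Type) (F : Defs.frel Sig W) R x y :
  added F R x y -> Defs.closure Pi F R x y.
Proof.
case=> pi Hpi [-> [h [Hh -> ->]]] F' HF HPhi.
by apply: (HPhi pi Hpi) => R' x' y' /Hh; apply: HF.
Qed.

(* Stability says that the edges added to a tree by one round of the rules already
   produce a frame satisfying every [Phi_pi]. *)
Lemma closure_tree_sub (m : nat) (T : Defs.frel Sig 'I_m) R x y :
  stable Pi -> is_tree T -> Defs.closure Pi T R x y -> T R x y \/ added T R x y.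
Proof.
move=> Hstable Htree /(_ (fun R x y => T R x y \/ added T R x y)).
apply=> [R' x' y'|pi Hpi g Hg]; first by left.
right; exists pi => //; split=> //; exists g; split=> //.
apply: (Hstable pi Hpi _ _ Htree) => R' x' y' /Hg [|]; first exact: closure_ext.
exact: added_closure.
Qed.

End Closure.

Section Constraints.
Variables (Sig : Type) (R0 : Sig) (s : form Sig) (A : SLO Sig) (a : nat -> A).
Variable Pi : profile Sig -> Prop.
Hypothesis hPi : forall pi, Pi pi -> fl_tree_profile pi.
Hypothesis HA : forall pi, Pi pi -> slo_valid A (iota' pi).
Variable L : seq Sig.
Local Notation m := (ndia s).+1.
Local Notation label := (tree_label R0 s a).
Local Notation added := (added Pi (tree_frame s)).

Lemma added_lt R (x y : 'I_m) : added R x y -> x < y.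
Proof.
case=> pi /hPi [_ _ _ Huv] [_ [h [Hh -> ->]]].
elim: Huv => [x' y' [R' H]|x' y' z' [R' H] _ IH]; first exact: tree_frame_lt (Hh _ _ _ H).
exact: ltn_trans (tree_frame_lt (Hh _ _ _ H)) IH.
Qed.

Definition constraints_ok (k : nat) (c : nat -> A) : Prop :=
  sle (eval a s) (label c 0) /\
  forall R (x y : 'I_m), List.In R L -> added R x y -> k <= x -> sle (c x) (dia R (label c y)).

Lemma constraints_ok_top : constraints_ok m (fun _ => top A).
Proof.
split; first by rewrite tree_label_top; apply: sle_refl.
by move=> R x y _ _; have := ltn_ord x; lia.
Qed.

Lemma strengthen_added (k : 'I_m) c R (y : 'I_m) :
  constraints_ok k.+1 c -> added R k y ->
  let c' := strengthen R0 s a c k R y in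
  [/\ constraints_ok k.+1 c', sle (c' k) (c k), sle (c' k) (dia R (label c' y))
    & forall y' : 'I_m, k < y' -> label c' y' = label c y'].
Proof.
move=> [Hsound Hok] Hky c'.
have Hlt := added_lt Hky.
have Hloc (y' : 'I_m) : k < y' -> label c' y' = label c y'.
  by move=> Hy'; apply: tree_label_local => i Hi; rewrite /c' /strengthen upd_other //; lia.
split=> //.
- split.
    case: Hky => pi Hpi [ER [h [Hh Ek Ey]]].
    have HT : is_tree_rooted_at (@pframe _ pi) (proot pi) by case: (hPi Hpi).
    have Hstr := tree_label_strengthen R0 a HT (HA Hpi) Hh c.
    by apply: sle_trans Hsound _; rewrite /c' Ek Ey ER.
  move=> R' x y' HR' Hxy' Hx; have := added_lt Hxy' => Hxy.
  rewrite Hloc; last lia.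
  by rewrite /c' /strengthen upd_other; [apply: Hok|lia].
- by rewrite /c' /strengthen upd_same; apply: sle_meetl.
- by rewrite /c' /strengthen upd_same Hloc //; apply: sle_meetr.
Qed.

Lemma strengthen_node (k : 'I_m) c (P : seq (Sig * 'I_m)) :
  constraints_ok k.+1 c -> exists2 c', constraints_ok k.+1 c' &
    forall R y, List.In (R, y) P -> List.In R L -> added R k y -> sle (c' k) (dia R (label c' y)).
Proof.
move=> Hc; elim: P => [|[R y] P [c1 Hc1 HP]]; first by exists c.
have [[HR Hky]|Hno] := classic (List.In R L /\ added R k y); last first.
  by exists c1 => // R' y' [[<- <-] HR' Hky|]; [case: Hno|apply: HP].
have [Hc2 Hle Hnew Hloc] := strengthen_added Hc1 Hky.
exists (strengthen R0 s a c1 k R y) => // R' y' [[<- <-] //|Hin HR' Hky'].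
rewrite Hloc; last exact: added_lt Hky'.
exact: sle_trans Hle (HP _ _ Hin HR' Hky').
Qed.

Lemma constraints_ok_pred (k : 'I_m) c : constraints_ok k.+1 c -> exists c', constraints_ok k c'.
Proof.
move=> Hc; have [c' [Hsound Hok] Hk] := strengthen_node (List.list_prod L (enum 'I_m)) Hc.
exists c'; split=> // R x y HR Hxy; rewrite leq_eqVlt => /orP [/eqP/val_inj Ex|Hx].
  by subst x; apply: Hk => //; apply: (List.in_prod _ _ _ _ HR); apply/InP; rewrite mem_enum.
exact: Hok.
Qed.

Lemma exists_constraints : exists c, constraints_ok 0 c.
Proof.
suff Hi i : i <= m -> exists c, constraints_ok (m - i) c by rewrite -(subnn m); apply: Hi.
elim: i => [_|i IH Hi]; first by exists (fun _ => top A); rewrite subn0; apply: constraints_ok_top.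
have Hk : m - i.+1 < m by lia.
have [c Hc] := IH (ltnW Hi).
apply: (constraints_ok_pred (k := Ordinal Hk) (c := c)).
by have -> : (m - i.+1).+1 = m - i by lia.
Qed.

End Constraints.

Lemma SLO_conseq_of_Kr_conseq (Sig : Type) (R0 : Sig) (Pi : profile Sig -> Prop)
    (hPi : forall pi, Pi pi -> fl_tree_profile pi) (hstable : stable Pi) (i : impl Sig) :
  Kr_conseq (Sigma' Pi) i -> SLO_conseq (Sigma' Pi) i.
Proof.
case: i => s t HK A HA a /=.
set T := tree_frame s; set CF := Defs.closure Pi T.
have HApi pi : Pi pi -> slo_valid A (iota' pi) by move=> Hpi; apply: HA; exists pi.
have HCF : forall i, Sigma' Pi i -> frame_valid CF i.
  move=> _ [pi [Hpi ->]]; apply: frame_valid_iota'; last exact: closure_Phi.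
  by case: (hPi _ Hpi).
have Ht : sat CF (tree_val s) t ord0.
  by apply: (HK _ CF HCF); apply: sat_frame_mono (sat_tree_model s) => R x y; apply: closure_ext.
have Htree : is_tree T by exists ord0; apply: tree_frame_rooted.
have [c [Hsound Hok]] := exists_constraints R0 s a hPi HApi (dia_labels t).
apply: sle_trans Hsound _.
have Ht' : sat (fun R x y => T R x y \/ added Pi T R x y) (tree_val s) t ord0.
  by apply: sat_frame_mono Ht => R x y; apply: closure_tree_sub hstable Htree.
apply: (sat_label_sle (l := fun x : 'I_(ndia s).+1 => tree_label R0 s a c x) _ _ Ht').
- by move=> p x; apply: tree_label_var.
- move=> R x y HR [Hxy|Hxy]; first exact: tree_label_edge.
  exact: sle_trans (tree_label_sle _ _ _ _ _) (Hok _ _ _ HR Hxy (leq0n _)).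
Qed.

Theorem theorem5p10 (Sig : Type) (hSig : inhabited Sig)
  (Pi : profile Sig -> Prop)
  (hPi : forall pi, Pi pi -> fl_tree_profile pi)
  (hstable : stable Pi) :
  complete (Sigma' Pi).
Proof.
case: hSig => R0 i; split; first exact: SLO_conseq_of_Kr_conseq.
exact: Kr_conseq_of_SLO_conseq.
Qed.
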